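(* Let $X$ be a proper geodesic metric space with basepoint $x_0$, and let $\gamma_1,\gamma_2$ be geodesic rays representing different elements of the Morse boundary of $X$. Then $\rho[\gamma_1]\neq\rho[\gamma_2]$, where $\rho[\gamma]=\lim_{t\to\infty}\rho_{\gamma(t)}$ and $\rho_y(z)=d(z,y)-d(x_0,y)$.
   Context: The horofunction map sends $y\in X$ to the function $\rho_y\in C(X)$, $\rho_y(z)=d(z,y)-d(x_0,y)$, where $C(X)$ is the space of continuous real-valued functions on $X$ with the topology of uniform convergence on compact sets; the horofunction compactification $\overline X^h$ is the closure of $\{\rho_y\}$ in $C(X)$. The Morse boundary is the set of Morse geodesic rays up to bounded Hausdorff distance, where a quasi-geodesic $\gamma$ is Morse if there is a non-decreasing continuous $M:\mathbb{R}_{\ge1}\to\mathbb{R}_{\ge0}$ such that every $Q$--quasi-geodesic with endpoints on $\gamma$ stays in the closed $M(Q)$--neighbourhood of the corresponding subsegment. *)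

From Stdlib Require Import Reals Lra.
Open Scope R_scope.

Definition is_metric {X : Type} (d : X -> X -> R) : Prop :=
  (forall x y, 0 <= d x y) /\
  (forall x y, d x y = 0 <-> x = y) /\
  (forall x y, d x y = d y x) /\
  (forall x y z, d x z <= d x y + d y z).

Definition seq_converges {X : Type} (d : X -> X -> R) (u : nat -> X) (x : X) : Prop :=
  forall eps, 0 < eps -> exists N, forall n, (N <= n)%nat -> d (u n) x < eps.

(** Compactness of a subset of a metric space (sequential compactness, which
    is equivalent to compactness in metric spaces). *)
Definition compact_set {X : Type} (d : X -> X -> R) (K : X -> Prop) : Prop :=
  forall u : nat -> X, (forall n, K (u n)) ->
  exists (phi : nat -> nat) (x : X),
    (forall n m, (n < m)%nat -> (phi n < phi m)%nat) /\ K x /\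
    seq_converges d (fun n => u (phi n)) x.

Definition proper_space {X : Type} (d : X -> X -> R) : Prop :=
  forall (x : X) (r : R), compact_set d (fun y => d x y <= r).

Definition geodesic_space {X : Type} (d : X -> X -> R) : Prop :=
  forall x y : X, exists c : R -> X,
    c 0 = x /\ c (d x y) = y /\
    (forall s t, 0 <= s <= d x y -> 0 <= t <= d x y -> d (c s) (c t) = Rabs (s - t)).

Definition geodesic_ray {X : Type} (d : X -> X -> R) (g : R -> X) : Prop :=
  forall s t, 0 <= s -> 0 <= t -> d (g s) (g t) = Rabs (s - t).

(** Q-quasi-geodesic (i.e. (Q,Q)-quasi-geodesic) defined on [a,b]. *)
Definition quasi_geodesic {X : Type} (d : X -> X -> R) (Q a b : R) (c : R -> X) : Prop :=
  a <= b /\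
  forall s t, a <= s <= b -> a <= t <= b ->
    Rabs (s - t) / Q - Q <= d (c s) (c t) /\ d (c s) (c t) <= Q * Rabs (s - t) + Q.

Definition morse_gauge (M : R -> R) : Prop :=
  (forall Q, 1 <= Q -> 0 <= M Q) /\
  (forall Q Q', 1 <= Q -> Q <= Q' -> M Q <= M Q') /\
  (forall Q, 1 <= Q -> forall eps, 0 < eps -> exists delta, 0 < delta /\
     forall Q', 1 <= Q' -> Rabs (Q' - Q) < delta -> Rabs (M Q' - M Q) < eps).

Definition morse_ray {X : Type} (d : X -> X -> R) (g : R -> X) : Prop :=
  exists M : R -> R, morse_gauge M /\
  forall (Q a b s t : R) (c : R -> X),
    1 <= Q -> 0 <= s -> 0 <= t ->
    quasi_geodesic d Q a b c -> c a = g s -> c b = g t ->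
    forall u, a <= u <= b ->
      exists r, Rmin s t <= r <= Rmax s t /\ d (c u) (g r) <= M Q.

Definition bounded_hausdorff {X : Type} (d : X -> X -> R) (g1 g2 : R -> X) : Prop :=
  exists C, (forall s, 0 <= s -> exists t, 0 <= t /\ d (g1 s) (g2 t) <= C) /\
            (forall t, 0 <= t -> exists s, 0 <= s /\ d (g1 s) (g2 t) <= C).

Definition rho {X : Type} (d : X -> X -> R) (x0 y : X) : X -> R :=
  fun z => d z y - d x0 y.

(** rho_{g(t)} -> f as t -> oo in C(X) (uniform convergence on compact sets). *)
Definition horo_limit {X : Type} (d : X -> X -> R) (x0 : X) (g : R -> X) (f : X -> R) : Prop :=
  forall K : X -> Prop, compact_set d K ->
  forall eps, 0 < eps -> exists T, forall t, T <= t -> forall z, K z ->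
    Rabs (rho d x0 (g t) z - f z) < eps.

From Stdlib Require Import Reals Lra.
Open Scope R_scope.

(* Suppose both rays had the same horofunction limit f.  Along gamma_1 the
   defect d(x0, z) + f(z) stays bounded (by 2 d(x0, gamma_1(0))).  For any z
   of bounded defect and t large, the broken geodesic
   gamma_2(0) -> z -> gamma_2(t) is longer than d(gamma_2(0), gamma_2(t)) by a
   bounded amount, hence is a uniform quasi-geodesic; the Morse property of
   gamma_2 then puts z uniformly close to gamma_2.  By symmetry the two rays
   are at bounded Hausdorff distance. *)

Section Metric.

Variables (X : Type) (d : X -> X -> R).
Hypothesis Hmet : is_metric d.

Lemma dist_ge0 x y : 0 <= d x y.
Proof. apply Hmet. Qed.

Lemma dist_refl x : d x x = 0.
Proof. now apply Hmet. Qed.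

Lemma dist_eq0 x y : d x y = 0 -> x = y.
Proof. apply Hmet. Qed.

Lemma dist_sym x y : d x y = d y x.
Proof. apply Hmet. Qed.

Lemma dist_triangle x y z : d x z <= d x y + d y z.
Proof. apply Hmet. Qed.

Definition geodesic_segment (c : R -> X) (x y : X) : Prop :=
  c 0 = x /\ c (d x y) = y /\
  forall s t, 0 <= s <= d x y -> 0 <= t <= d x y -> d (c s) (c t) = Rabs (s - t).

Lemma geodesic_segment_dist_start c x y s :
  geodesic_segment c x y -> 0 <= s <= d x y -> d x (c s) = s.
Proof.
  intros (c0 & _ & Hc) Hs. rewrite <- c0 at 1.
  rewrite Hc by lra. rewrite Rabs_minus_sym, Rminus_0_r. apply Rabs_pos_eq; lra.
Qed.

Lemma geodesic_segment_dist_end c x y s :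
  geodesic_segment c x y -> 0 <= s <= d x y -> d (c s) y = d x y - s.
Proof.
  intros (_ & c1 & Hc) Hs. rewrite <- c1 at 1.
  rewrite Hc by lra. rewrite Rabs_minus_sym. apply Rabs_pos_eq; lra.
Qed.

Lemma geodesic_ray_dist g s t :
  geodesic_ray d g -> 0 <= s <= t -> d (g s) (g t) = t - s.
Proof.
  intros Hg Hst. rewrite Hg by lra. rewrite Rabs_minus_sym. apply Rabs_pos_eq; lra.
Qed.

Lemma quasi_geodesic_of_rough_isometry (C a b : R) (c : R -> X) :
  a <= b ->
  (forall s t, a <= s <= b -> a <= t <= b ->
     Rabs (s - t) - C <= d (c s) (c t) <= Rabs (s - t)) ->
  quasi_geodesic d (Rmax 1 C) a b c.
Proof.
  intros Hab Hc. split; [exact Hab |]. intros s t Hs Ht.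
  pose proof (Rmax_l 1 C). pose proof (Rmax_r 1 C).
  set (Q := Rmax 1 C) in *.
  pose proof (Rabs_pos (s - t)). specialize (Hc s t Hs Ht).
  assert (Rabs (s - t) / Q <= Rabs (s - t)).
  { apply Rmult_le_reg_r with Q; [lra |].
    unfold Rdiv. rewrite Rmult_assoc, Rinv_l by lra. nra. }
  split; nra.
Qed.

Lemma broken_geodesic_dist c1 c2 p m q C s u :
  geodesic_segment c1 p m -> geodesic_segment c2 m q ->
  d p m + d m q <= d p q + C ->
  0 <= s <= d p m -> 0 <= u <= d m q ->
  d p m - s + u - C <= d (c1 s) (c2 u) <= d p m - s + u.
Proof.
  intros H1 H2 Hdef Hs Hu.
  pose proof (geodesic_segment_dist_start _ _ _ _ H1 Hs).
  pose proof (geodesic_segment_dist_end _ _ _ _ H1 Hs).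
  pose proof (geodesic_segment_dist_start _ _ _ _ H2 Hu).
  pose proof (geodesic_segment_dist_end _ _ _ _ H2 Hu).
  pose proof (dist_triangle (c1 s) m (c2 u)).
  pose proof (dist_triangle p (c1 s) q).
  pose proof (dist_triangle (c1 s) (c2 u) q).
  lra.
Qed.

Definition concat_path (c1 c2 : R -> X) (A u : R) : X :=
  if Rle_dec u A then c1 u else c2 (u - A).

Lemma concat_path_rough_isometry c1 c2 p m q C s t :
  geodesic_segment c1 p m -> geodesic_segment c2 m q ->
  d p m + d m q <= d p q + C ->
  0 <= s <= d p m + d m q -> 0 <= t <= d p m + d m q ->
  Rabs (s - t) - C <= d (concat_path c1 c2 (d p m) s) (concat_path c1 c2 (d p m) t)
    <= Rabs (s - t).
Proof.
  intros H1 H2 Hdef Hs Ht. pose proof H1 as (_ & _ & Hc1). pose proof H2 as (_ & _ & Hc2).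
  pose proof (dist_triangle p m q).
  unfold concat_path. destruct (Rle_dec s (d p m)), (Rle_dec t (d p m)).
  - rewrite Hc1 by lra. lra.
  - rewrite Rabs_minus_sym, Rabs_pos_eq by lra.
    pose proof (broken_geodesic_dist _ _ _ _ _ C s (t - d p m) H1 H2 Hdef).
    lra.
  - rewrite dist_sym, Rabs_pos_eq by lra.
    pose proof (broken_geodesic_dist _ _ _ _ _ C t (s - d p m) H1 H2 Hdef).
    lra.
  - rewrite Hc2 by lra. replace (s - d p m - (t - d p m)) with (s - t) by ring. lra.
Qed.

Lemma broken_geodesic_quasi_geodesic (Hgeo : geodesic_space d) p m q C :
  d p m + d m q <= d p q + C ->
  exists c, quasi_geodesic d (Rmax 1 C) 0 (d p m + d m q) c /\
    c 0 = p /\ c (d p m + d m q) = q /\ c (d p m) = m.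
Proof.
  intros Hdef.
  destruct (Hgeo p m) as [c1 H1]. destruct (Hgeo m q) as [c2 H2].
  pose proof (dist_ge0 p m). pose proof (dist_ge0 m q).
  exists (concat_path c1 c2 (d p m)). split.
  { apply quasi_geodesic_of_rough_isometry; [lra |].
    intros s t Hs Ht. now apply (concat_path_rough_isometry _ _ p m q). }
  unfold concat_path. destruct H1 as (c10 & c1m & _), H2 as (_ & c2q & _).
  split; [| split].
  - destruct (Rle_dec 0 (d p m)); [exact c10 | lra].
  - destruct (Rle_dec (d p m + d m q) (d p m)).
    + assert (Hmq : d m q = 0) by lra. rewrite Hmq, Rplus_0_r, c1m.
      now apply dist_eq0.
    + replace (d p m + d m q - d p m) with (d m q) by ring. exact c2q.
  - destruct (Rle_dec (d p m) (d p m)); [exact c1m | lra].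
Qed.

Lemma compact_singleton p : compact_set d (fun z => z = p).
Proof.
  intros u Hu. exists (fun n => n), p.
  split; [auto | split; [reflexivity |]].
  intros eps Heps. exists O. intros n _. rewrite Hu, dist_refl. exact Heps.
Qed.

Variable x0 : X.

Lemma horo_limit_pointwise g f z eps :
  horo_limit d x0 g f -> 0 < eps ->
  exists T, forall t, T <= t -> Rabs (rho d x0 (g t) z - f z) < eps.
Proof.
  intros Hf Heps. destruct (Hf _ (compact_singleton z) eps Heps) as [T HT].
  exists T. intros t Ht. now apply HT.
Qed.

Lemma horo_limit_ray_defect g f s :
  geodesic_ray d g -> horo_limit d x0 g f -> 0 <= s ->
  d x0 (g s) + f (g s) <= 2 * d x0 (g 0).
Proof.
  intros Hg Hf Hs. apply Rle_plus_epsilon. intros eps Heps.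
  destruct (horo_limit_pointwise g f (g s) eps Hf Heps) as [T HT].
  pose proof (Rmax_l T s). pose proof (Rmax_r T s). set (t := Rmax T s) in *.
  specialize (HT t ltac:(lra)). unfold rho in HT. apply Rabs_def2 in HT.
  pose proof (geodesic_ray_dist g s t Hg ltac:(lra)).
  pose proof (geodesic_ray_dist g 0 t Hg ltac:(lra)).
  pose proof (geodesic_ray_dist g 0 s Hg ltac:(lra)).
  pose proof (dist_triangle (g 0) x0 (g t)).
  pose proof (dist_triangle x0 (g 0) (g s)).
  rewrite (dist_sym (g 0) x0) in *. lra.
Qed.

Lemma morse_ray_near_horo_sublevel (Hgeo : geodesic_space d) g f D :
  geodesic_ray d g -> morse_ray d g -> horo_limit d x0 g f ->
  exists K, forall z, d x0 z + f z <= D -> exists r, 0 <= r /\ d z (g r) <= K.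
Proof.
  intros Hg (M & _ & Hmorse) Hf.
  set (C := D + 2 * d x0 (g 0) + 1).
  exists (M (Rmax 1 C)). intros z Hz.
  destruct (horo_limit_pointwise g f z 1 Hf Rlt_0_1) as [T HT].
  pose proof (Rmax_l T 0). pose proof (Rmax_r T 0). set (t := Rmax T 0) in *.
  specialize (HT t ltac:(lra)). unfold rho in HT. apply Rabs_def2 in HT.
  assert (Hdef : d (g 0) z + d z (g t) <= d (g 0) (g t) + C).
  { pose proof (geodesic_ray_dist g 0 t Hg ltac:(lra)).
    pose proof (dist_triangle (g 0) x0 z).
    pose proof (dist_triangle x0 (g 0) (g t)).
    rewrite (dist_sym (g 0) x0) in *. unfold C. lra. }
  destruct (broken_geodesic_quasi_geodesic Hgeo _ _ _ _ Hdef) as (c & Hc & c0 & ct & cz).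
  pose proof (dist_ge0 (g 0) z). pose proof (dist_ge0 z (g t)).
  destruct (Hmorse (Rmax 1 C) 0 _ 0 t c (Rmax_l _ _) (Rle_refl 0) ltac:(lra)
              Hc c0 ct (d (g 0) z) ltac:(lra)) as (r & Hr & Hzr).
  rewrite Rmin_left in Hr by lra. rewrite cz in Hzr. now exists r.
Qed.

Lemma ray_near_of_common_horo_limit (Hgeo : geodesic_space d) g1 g2 f :
  geodesic_ray d g1 -> geodesic_ray d g2 -> morse_ray d g2 ->
  horo_limit d x0 g1 f -> horo_limit d x0 g2 f ->
  exists K, forall s, 0 <= s -> exists r, 0 <= r /\ d (g1 s) (g2 r) <= K.
Proof.
  intros Hg1 Hg2 Hm2 Hf1 Hf2.
  destruct (morse_ray_near_horo_sublevel Hgeo g2 f (2 * d x0 (g1 0)) Hg2 Hm2 Hf2)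
    as [K HK].
  exists K. intros s Hs. apply HK. now apply horo_limit_ray_defect.
Qed.

End Metric.

Theorem lemma5p5 (X : Type) (d : X -> X -> R) (x0 : X)
  (Hmet : is_metric d) (Hprop : proper_space d) (Hgeo : geodesic_space d)
  (g1 g2 : R -> X)
  (Hr1 : geodesic_ray d g1) (Hr2 : geodesic_ray d g2)
  (Hm1 : morse_ray d g1) (Hm2 : morse_ray d g2)
  (Hdiff : ~ bounded_hausdorff d g1 g2)
  (f1 f2 : X -> R)
  (Hf1 : horo_limit d x0 g1 f1) (Hf2 : horo_limit d x0 g2 f2) :
  f1 <> f2.
Proof.
  intros <-. apply Hdiff.
  destruct (ray_near_of_common_horo_limit X d Hmet x0 Hgeo g1 g2 f1 Hr1 Hr2 Hm2 Hf1 Hf2)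
    as [K1 HK1].
  destruct (ray_near_of_common_horo_limit X d Hmet x0 Hgeo g2 g1 f1 Hr2 Hr1 Hm1 Hf2 Hf1)
    as [K2 HK2].
  exists (Rmax K1 K2). split.
  - intros s Hs. destruct (HK1 s Hs) as (r & Hr & Hd). exists r. split; [exact Hr |].
    pose proof (Rmax_l K1 K2). lra.
  - intros t Ht. destruct (HK2 t Ht) as (r & Hr & Hd). exists r. split; [exact Hr |].
    rewrite (dist_sym X d Hmet). pose proof (Rmax_r K1 K2). lra.
Qed.
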